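(* Let $T$ be a primed tableau of shape $\lambda/\mu$ over $X'_k$, $1\le i\le k-1$, $j=i+1$, with $e_i(T)\ne 0$, and let $y,p$ be the boxes chosen in the definition of $e_i$. Then either $p=y$ and $e_i(T)$ is obtained from $T$ by replacing the entry $j$ in $y$ by $i$, or $p\ne y$ and $e_i(T)$ is obtained by replacing the $j$ in $y$ by $j'$ and a $j'$ in $p$ by $i$. Moreover, $e_i(T)$ is again a primed tableau of shape $\lambda/\mu$.
   Context: Primed tableaux: Fix $k$. $X'_k=\{1'<1<2'<2<\dots<k'<k\}$; moving one step along this chain is ''changing by a half unit'' (e.g. $j\to j'\to i$ are decreases by a half unit when $j=i+1$). A primed tableau of (skew) shape $\lambda/\mu$ is a filling of the diagram (English convention) with letters of $X'_k$, rows and columns weakly increasing, at most one $i'$ per row and at most one $i$ per column, for every $i$. For a position $p$, $c(p)$ is its entry; a position that is not a box of $T$ is regarded as having content smaller than every letter when it lies to the left of or above the relevant box. The reading word of $T$ is the word of its unprimed entries, read row by row left to right, from the bottom row to the top row. Bracketing: fix $i$, $j=i+1$. In the subword of the reading word consisting of the letters $i$ and $j$, repeatedly pair (bracket) a letter $j$ with a letter $i$ occurring later such that no unbracketed letters lie between them, until the unbracketed letters form a word $i^aj^b$. Operator $e_i$: if there is no unbracketed $j$, $e_i(T)=0$. Otherwise let $y$ be the box corresponding to the leftmost unbracketed $j$; $W_y$ the position immediately left of $y$, $N_y$ the position immediately above $y$. Choose a box $p$: (1) if $c(W_y)\le i$ and $c(N_y)<i$, $p=y$; (2) if $c(W_y)=j'$,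 $p=W_y$; (3) if $c(W_y)\le i$ and $c(N_y)\in\{i,j'\}$, take the maximal ribbon starting at $N_y$ and extending by steps North and/or East consisting only of boxes with entries $i$ or $j'$, and let $p$ be its Northeast-most box. Then $e_i(T)$ is obtained from $T$ by decreasing $c(y)$ by a half unit and then decreasing $c(p)$ by a half unit. *)

From mathcomp Require Import all_boot.
Set Implicit Arguments. Unset Strict Implicit. Unset Printing Implicit Defensive.

(* ENCODING of the alphabet X'_k = {1' < 1 < 2' < 2 < ... < k' < k}:
   the primed letter  i' is the natural number 2i-1,
   the unprimed letter i is the natural number 2i.
   Thus the order of X'_k is the order of nat, "decreasing by a half unit"
   is subtracting 1, and "smaller than every letter" is 0.
   Letters are exactly the naturals in [1, 2k]; unprimed = even. *)
Definition unprimed (a : nat) : nat := a.*2.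
Definition primed   (a : nat) : nat := a.*2.-1.

(* Positions (row, column), 0-indexed, English convention: row 0 on top. *)
Definition pos := (nat * nat)%type.

(* A filling: an assignment of a code to each position; only its values on
   the boxes of the shape are relevant. *)
Definition filling := nat -> nat -> nat.

Definition is_partition (l : seq nat) : bool := sorted geq l && (0 \notin l).

Definition in_box (lam mu : seq nat) (q : pos) : bool :=
  (nth 0 mu q.1 <= q.2) && (q.2 < nth 0 lam q.1).

Definition primed_tableau (k : nat) (lam mu : seq nat) (T : filling) : Prop :=
  [/\ is_partition lam, is_partition mu &
      (forall r, nth 0 mu r <= nth 0 lam r)] /\
  [/\
      (forall r c, in_box lam mu (r, c) -> 0 < T r c <= k.*2),
      (forall r c1 c2, in_box lam mu (r, c1) -> in_box lam mu (r, c2) ->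
          c1 <= c2 -> T r c1 <= T r c2) &
      (forall r1 r2 c, in_box lam mu (r1, c) -> in_box lam mu (r2, c) ->
          r1 <= r2 -> T r1 c <= T r2 c)] /\
  [/\
      (* at most one i' per row *)
      (forall r c1 c2, in_box lam mu (r, c1) -> in_box lam mu (r, c2) ->
          c1 < c2 -> odd (T r c1) -> T r c1 <> T r c2) &
      (* at most one i per column *)
      (forall r1 r2 c, in_box lam mu (r1, c) -> in_box lam mu (r2, c) ->
          r1 < r2 -> ~~ odd (T r1 c) -> T r1 c <> T r2 c)].

Definition reading_word (lam mu : seq nat) (T : filling) : seq (nat * pos) :=
  flatten [seq [seq (T r c, (r, c)) |
                c <- iota (nth 0 mu r) (nth 0 lam r - nth 0 mu r)
                & ~~ odd (T r c)]
          | r <- rev (iota 0 (size lam))].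

(* Bracketing (j = i+1): scanning the word left to right, each letter i is
   bracketed with the nearest preceding still-unbracketed j, if any.  The
   returned stack lists the boxes of the unbracketed letters j, the most
   recent first (so the leftmost unbracketed j is the last element). *)
Fixpoint unbracketed_j (i : nat) (w : seq (nat * pos)) (st : seq pos)
  : seq pos :=
  match w with
  | [::] => st
  | (a, b) :: w' =>
      if a == unprimed i.+1 then unbracketed_j i w' (b :: st)
      else if a == unprimed i then unbracketed_j i w' (behead st)
      else unbracketed_j i w' st
  end.

Definition content (lam mu : seq nat) (T : filling) (q : pos) : nat :=
  if in_box lam mu q then T q.1 q.2 else 0.

Definition content_W lam mu T (y : pos) : nat :=
  if y.2 is c.+1 then content lam mu T (y.1, c) else 0.
Definition content_N lam mu T (y : pos) : nat :=
  if y.1 is r.+1 then content lam mu T (r, y.2) else 0.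

Definition ribbon_box (i : nat) lam mu T (q : pos) : bool :=
  in_box lam mu q && ((T q.1 q.2 == unprimed i) || (T q.1 q.2 == primed i.+1)).

Fixpoint ribbon_end (fuel : nat) (i : nat) lam mu T (q : pos) : pos :=
  match fuel with
  | 0 => q
  | n.+1 =>
      if (0 < q.1) && ribbon_box i lam mu T (q.1.-1, q.2)
      then ribbon_end n i lam mu T (q.1.-1, q.2)
      else if ribbon_box i lam mu T (q.1, q.2.+1)
      then ribbon_end n i lam mu T (q.1, q.2.+1)
      else q
  end.

(* The boxes (y, p) chosen in the definition of e_i, or None if there is no
   unbracketed j (e_i(T) = 0). *)
Definition ei_choice (i : nat) (lam mu : seq nat) (T : filling)
  : option (pos * pos) :=
  match rev (unbracketed_j i (reading_word lam mu T) [::]) with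
  | [::] => None
  | y :: _ =>
      let cW := content_W lam mu T y in
      let cN := content_N lam mu T y in
      let W := (y.1, y.2.-1) in
      let N := (y.1.-1, y.2) in
      if (cW <= unprimed i) && (cN < unprimed i) then Some (y, y)
      else if cW == primed i.+1 then Some (y, W)
      else if (cW <= unprimed i) &&
              ((cN == unprimed i) || (cN == primed i.+1))
      then Some (y, ribbon_end (N.1 + sumn lam) i lam mu T N)
      else Some (y, y) (* unreachable for primed tableaux *)
  end.

Definition lower (T : filling) (q : pos) : filling :=
  fun r c => if (r, c) == q then (T r c).-1 else T r c.

(* e_i(T); None stands for 0. *)
Definition ei (i : nat) (lam mu : seq nat) (T : filling) : option filling :=
  match ei_choice i lam mu T with
  | None => None
  | Some (y, p) => Some (lower (lower T y) p)
  end.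

From mathcomp Require Import all_boot zify.
Set Implicit Arguments. Unset Strict Implicit. Unset Printing Implicit Defensive.

(* With the letters i, j', j coded as i.*2, i.*2.+1, i.*2.+2, let y be the
   leftmost unbracketed j.  Every i read after y is bracketed with a j read
   after y, so every stretch of the reading word starting right after y
   contains at least as many j's as i's.  In case (3)
   we walk the ribbon from N_y carrying an inequality saying that the i's
   read since y outnumber the j's; at the North-East end of the ribbon this
   contradicts the bracketing count unless the end holds j', and the box above
   it is then smaller than i.  Starting the walk with one extra i shows that in
   case (2) the box above W_y is smaller than i as well. *)

Lemma nth_partition_nonincr (l : seq nat) r1 r2 :
  is_partition l -> r1 <= r2 -> nth 0 l r2 <= nth 0 l r1.
Proof.
move=> /andP[sorted_l _] r12.
have [r2_in|r2_out] := ltnP r2 (size l); last by rewrite nth_default.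
have geq_trans : transitive geq by move=> a b c /= ba cb; apply: leq_trans ba.
by apply: (sorted_leq_nth geq_trans leqnn 0 sorted_l); rewrite ?inE //; lia.
Qed.

Lemma nth_leq_sumn (l : seq nat) r : nth 0 l r <= sumn l.
Proof. by elim: l r => [|a l IHl] [|r] //=; [lia | have := IHl r; lia]. Qed.

Lemma primed_tableau_of_pairs k lam mu F :
  [/\ is_partition lam, is_partition mu & forall r, nth 0 mu r <= nth 0 lam r] ->
  (forall r c, in_box lam mu (r, c) -> 0 < F r c <= k.*2) ->
  (forall r c1 c2, in_box lam mu (r, c1) -> in_box lam mu (r, c2) -> c1 < c2 ->
     F r c1 <= F r c2 /\ (odd (F r c1) -> F r c1 <> F r c2)) ->
  (forall r1 r2 c, in_box lam mu (r1, c) -> in_box lam mu (r2, c) -> r1 < r2 ->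
     F r1 c <= F r2 c /\ (~~ odd (F r1 c) -> F r1 c <> F r2 c)) ->
  primed_tableau k lam mu F.
Proof.
move=> shape range rows cols; split=> //; split; split=> //.
- move=> r c1 c2 b1 b2; rewrite leq_eqVlt => /orP[/eqP -> //|c12].
  by case: (rows r c1 c2 b1 b2 c12).
- move=> r1 r2 c b1 b2; rewrite leq_eqVlt => /orP[/eqP -> //|r12].
  by case: (cols r1 r2 c b1 b2 r12).
- by move=> r c1 c2 b1 b2 c12; case: (rows r c1 c2 b1 b2 c12).
- by move=> r1 r2 c b1 b2 r12; case: (cols r1 r2 c b1 b2 r12).
Qed.

Lemma lower_lower_same (T : filling) (y : pos) i a b : T y.1 y.2 = i.*2.+2 ->
  lower (lower T y) y a b = if (a, b) == y then i.*2 else T a b.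
Proof. by rewrite /lower; case: eqP => [<-|] // ->. Qed.

Lemma lower_lower_pair (T : filling) (y p : pos) i a b : p <> y ->
  T y.1 y.2 = i.*2.+2 -> T p.1 p.2 = i.*2.+1 ->
  lower (lower T y) p a b =
    if (a, b) == y then i.*2.+1 else if (a, b) == p then i.*2 else T a b.
Proof.
rewrite /lower => p_ne_y Ty Tp; case: eqP => [ab_p|_]; case: eqP => [ab_y|_] //.
- by move: p_ne_y; rewrite -ab_p -ab_y.
- by move: Tp; rewrite -ab_p => /= ->.
- by move: Ty; rewrite -ab_y => /= ->.
Qed.

Section Bracketing.
Variable i : nat.

(* The number of entries of the initial stack popped while scanning [w]. *)
Definition popped (w : seq (nat * pos)) : nat :=
  foldr (fun x n => if x.1 == unprimed i.+1 then n.-1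
                    else if x.1 == unprimed i then n.+1 else n) 0 w.

Lemma unbracketed_j_cat w1 w2 st :
  unbracketed_j i (w1 ++ w2) st = unbracketed_j i w2 (unbracketed_j i w1 st).
Proof.
elim: w1 st => [|[a b] w1 IHw] st //=.
by case: ifP => _; [|case: ifP => _]; rewrite IHw.
Qed.

Lemma unbracketed_jE w st : exists2 L,
  unbracketed_j i w st = L ++ drop (popped w) st &
  all (fun x => (unprimed i.+1, x) \in w) L.
Proof.
elim: w st => [|[a b] w IHw] st /=; first by exists [::]; rewrite ?drop0.
have in_tail L : all (fun x => (unprimed i.+1, x) \in w) L ->
    all (fun x => (unprimed i.+1, x) \in (a, b) :: w) L.
  by apply: sub_all => x; rewrite in_cons => ->; rewrite orbT.
case: ifP => [/eqP a_j|_]; last case: ifP => _.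
- have [L -> inL] := IHw (b :: st).
  case: (popped w) => [|n] /=; last by exists L => //; apply: in_tail.
  exists (rcons L b); first by rewrite drop0 -cats1 -catA.
  by rewrite -cats1 all_cat in_tail //= inE a_j eqxx.
- have [L -> inL] := IHw (behead st).
  by exists L; [rewrite -drop1 drop_drop addn1 | apply: in_tail].
- by have [L -> inL] := IHw st; exists L => //; apply: in_tail.
Qed.

Lemma count_i_prefix w1 w2 :
  count (fun x : nat * pos => x.1 == unprimed i) w1 <=
  count (fun x : nat * pos => x.1 == unprimed i.+1) w1 + popped (w1 ++ w2).
Proof.
elim: w1 => [|[a b] w1 IHw] //=; move: IHw; rewrite /unprimed doubleS.
by case: eqP => [->|_]; case: eqP => [|_]; lia.
Qed.

End Bracketing.

Section Tableau.
Variables (k : nat) (lam mu : seq nat) (T : filling).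
Hypothesis tabT : primed_tableau k lam mu T.
Local Notation box q := (in_box lam mu q).

Lemma tab_shape :
  [/\ is_partition lam, is_partition mu & forall r, nth 0 mu r <= nth 0 lam r].
Proof. by case: tabT. Qed.

Lemma partition_lam : is_partition lam. Proof. by case: tab_shape. Qed.
Lemma partition_mu : is_partition mu. Proof. by case: tab_shape. Qed.

Lemma tab_range r c : box (r, c) -> 0 < T r c <= k.*2.
Proof. by case: tabT => _ [[]] + _ _ _; apply. Qed.

Lemma tab_row r c1 c2 : box (r, c1) -> box (r, c2) -> c1 <= c2 -> T r c1 <= T r c2.
Proof. by case: tabT => _ [[]] _ + _ _; apply. Qed.

Lemma tab_col r1 r2 c : box (r1, c) -> box (r2, c) -> r1 <= r2 -> T r1 c <= T r2 c.
Proof. by case: tabT => _ [[]] _ _ + _; apply. Qed.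

Lemma tab_row_primed r c1 c2 :
  box (r, c1) -> box (r, c2) -> c1 < c2 -> odd (T r c1) -> T r c1 <> T r c2.
Proof. by case: tabT => _ [_ []] + _; apply. Qed.

Lemma tab_col_unprimed r1 r2 c :
  box (r1, c) -> box (r2, c) -> r1 < r2 -> ~~ odd (T r1 c) -> T r1 c <> T r2 c.
Proof. by case: tabT => _ [_ []] _; apply. Qed.

Lemma row_lt_primedl r c1 c2 :
  box (r, c1) -> box (r, c2) -> c1 < c2 -> odd (T r c1) -> T r c1 < T r c2.
Proof.
move=> b1 b2 c12 odd1; rewrite ltn_neqAle tab_row ?(ltnW c12) // andbT.
exact/eqP/tab_row_primed.
Qed.

Lemma row_lt_primedr r c1 c2 :
  box (r, c1) -> box (r, c2) -> c1 < c2 -> odd (T r c2) -> T r c1 < T r c2.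
Proof.
move=> b1 b2 c12 odd2; have [odd1|even1] := boolP (odd (T r c1)).
  exact: row_lt_primedl.
rewrite ltn_neqAle tab_row ?(ltnW c12) // andbT.
by apply: contraNneq even1 => ->.
Qed.

Lemma col_lt_unprimedu r1 r2 c :
  box (r1, c) -> box (r2, c) -> r1 < r2 -> ~~ odd (T r1 c) -> T r1 c < T r2 c.
Proof.
move=> b1 b2 r12 even1; rewrite ltn_neqAle tab_col ?(ltnW r12) // andbT.
exact/eqP/tab_col_unprimed.
Qed.

Lemma col_lt_unprimedd r1 r2 c :
  box (r1, c) -> box (r2, c) -> r1 < r2 -> ~~ odd (T r2 c) -> T r1 c < T r2 c.
Proof.
move=> b1 b2 r12 even2; have [odd1|even1] := boolP (odd (T r1 c)); last first.
  exact: col_lt_unprimedu.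
rewrite ltn_neqAle tab_col ?(ltnW r12) // andbT.
by apply: contraTneq odd1 => ->.
Qed.

Lemma box_row r c1 c2 c : box (r, c1) -> box (r, c2) -> c1 <= c <= c2 -> box (r, c).
Proof. rewrite /in_box /=; lia. Qed.

Lemma box_col r1 r2 r c : box (r1, c) -> box (r2, c) -> r1 <= r <= r2 -> box (r, c).
Proof.
rewrite /in_box /= => /andP[? ?] /andP[? ?] /andP[r1r rr2].
have := nth_partition_nonincr partition_lam rr2.
have := nth_partition_nonincr partition_mu r1r; lia.
Qed.

Lemma box_up r1 r c1 c : box (r, c) -> box (r1, c1) -> r1 <= r -> c1 <= c -> box (r1, c).
Proof.
rewrite /in_box /= => /andP[? ?] /andP[? ?] r1r ?.
have := nth_partition_nonincr partition_lam r1r; lia.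
Qed.

Lemma box_mu_succ r c : box (r, c) -> nth 0 mu r.+1 <= c.
Proof.
rewrite /in_box /= => /andP[? _].
have := nth_partition_nonincr partition_mu (leqnSn r); lia.
Qed.

Lemma box_lt_sumn r c : box (r, c) -> c < sumn lam.
Proof. rewrite /in_box /= => /andP[_ ?]; have := nth_leq_sumn lam r; lia. Qed.

Lemma box_lt_size r c : box (r, c) -> r < size lam.
Proof.
rewrite /in_box /= => /andP[_]; apply: contraTT; rewrite -leqNgt => ?.
by rewrite nth_default.
Qed.

Definition row_word s lo hi : seq (nat * pos) :=
  [seq (T s e, (s, e)) | e <- iota lo (hi - lo) & ~~ odd (T s e)].
Definition full_row_word s := row_word s (nth 0 mu s) (nth 0 lam s).
Definition rows_word lo n := flatten [seq full_row_word t | t <- rev (iota lo n)].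
Definition word_before r c :=
  rows_word r.+1 (size lam - r.+1) ++ row_word r (nth 0 mu r) c.
Definition word_after r c := row_word r c.+1 (nth 0 lam r) ++ rows_word 0 r.

Lemma row_word_cat s lo m hi :
  lo <= m <= hi -> row_word s lo hi = row_word s lo m ++ row_word s m hi.
Proof.
move=> /andP[lo_m m_hi]; rewrite /row_word.
have -> : hi - lo = (m - lo) + (hi - m) by lia.
by rewrite iotaD subnKC // filter_cat map_cat.
Qed.

Lemma row_word1 s e :
  row_word s e e.+1 = if odd (T s e) then [::] else [:: (T s e, (s, e))].
Proof. by rewrite /row_word subSnn /=; case: (odd _). Qed.

Lemma mem_row_word x s lo hi : x \in row_word s lo hi ->
  x = (T s x.2.2, (s, x.2.2)) /\ lo <= x.2.2 < hi.
Proof.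
by case/mapP=> e; rewrite mem_filter mem_iota => /andP[_ ?] ->; split=> //=; lia.
Qed.

Lemma mem_rows_word x lo n : x \in rows_word lo n ->
  [/\ lo <= x.2.1 < lo + n, box x.2 & x.1 = T x.2.1 x.2.2].
Proof.
case/flattenP=> _ /mapP[t + ->] /mem_row_word[-> bx].
by rewrite mem_rev mem_iota /in_box.
Qed.

Lemma reading_word_split r c : box (r, c) -> ~~ odd (T r c) ->
  reading_word lam mu T = word_before r c ++ (T r c, (r, c)) :: word_after r c.
Proof.
move=> brc even_rc; have r_lt := box_lt_size brc.
move: brc; rewrite /in_box /= => /andP[mu_c c_lam].
have -> : reading_word lam mu T = rows_word 0 (size lam) by [].
have -> : size lam = r + (size lam - r.+1).+1 by lia.
rewrite /rows_word iotaD add0n rev_cat [iota r _]/= rev_cons.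
rewrite -cats1 !map_cat !flatten_cat /= cats0 /full_row_word.
rewrite (@row_word_cat r _ c) ?mu_c ?(ltnW c_lam) // (@row_word_cat r c c.+1) ?leqnSn //.
by rewrite row_word1 (negbTE even_rc) /word_before /word_after -!catA.
Qed.

Lemma notin_word_before a r c : (a, (r, c)) \notin word_before r c.
Proof.
by apply/negP; rewrite mem_cat => /orP[/mem_rows_word[+ _ _]|/mem_row_word[_ +]]; rewrite /=; lia.
Qed.

Lemma notin_word_after a r c : (a, (r, c)) \notin word_after r c.
Proof.
by apply/negP; rewrite mem_cat => /orP[/mem_row_word[_ +]|/mem_rows_word[+ _ _]]; rewrite /=; lia.
Qed.

Lemma leftmost_unbracketed i y l :
  rev (unbracketed_j i (reading_word lam mu T) [::]) = y :: l ->
  [/\ box y, T y.1 y.2 = unprimed i.+1, popped i (word_after y.1 y.2) = 0 &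
      unbracketed_j i (word_before y.1 y.2) [::] = [::]].
Proof.
move=> rev_st.
have st_rcons : unbracketed_j i (reading_word lam mu T) [::] = rcons (rev l) y.
  by rewrite -rev_cons -rev_st revK.
have y_in : y \in rcons (rev l) y by rewrite mem_rcons mem_head.
have [L st_eq inL] := unbracketed_jE i (reading_word lam mu T) [::].
have yL : y \in L by move: y_in; rewrite -st_rcons st_eq cats0.
have [_ box_y Ty] := @mem_rows_word _ 0 (size lam) (allP inL y yL).
case: y box_y Ty {rev_st yL} st_rcons y_in => r c /= brc Ty.
have even_rc : ~~ odd (T r c) by rewrite -Ty odd_double.
rewrite (reading_word_split brc even_rc) unbracketed_j_cat /= -Ty eqxx.
have [LU -> inLU] := unbracketed_jE i (word_before r c) [::].
have [LV -> inLV] := unbracketed_jE i (word_after r c) ((r, c) :: LU ++ [::]).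
have notin_LU : (r, c) \notin LU.
  by apply: contraNN (notin_word_before (unprimed i.+1) r c) => /(allP inLU).
have notin_LV : (r, c) \notin LV.
  by apply: contraNN (notin_word_after (unprimed i.+1) r c) => /(allP inLV).
rewrite cats0; case: (popped i _) => [|n] st_rcons y_in; last first.
  move: y_in; rewrite -st_rcons mem_cat (negbTE notin_LV) /= => /mem_drop.
  by rewrite (negbTE notin_LU).
split=> //; case: LU {inLU} notin_LU st_rcons => [//|x LU].
move=> + /(congr1 (last (r, c))); rewrite last_cat last_rcons /= => notin_xLU last_rc.
by rewrite -last_rc mem_last in notin_xLU.
Qed.

Definition row_count a s lo hi := count (fun e => T s e == a) (iota lo (hi - lo)).

Lemma count_row_word a s lo hi : ~~ odd a ->
  count (fun x : nat * pos => x.1 == a) (row_word s lo hi) = row_count a s lo hi.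
Proof.
move=> even_a; rewrite count_map count_filter; apply: eq_count => e /=.
by case: eqP => //= ->; rewrite even_a.
Qed.

Lemma row_count_cat a s lo m hi :
  lo <= m <= hi -> row_count a s lo hi = row_count a s lo m + row_count a s m hi.
Proof.
move=> /andP[lo_m m_hi]; rewrite /row_count.
have -> : hi - lo = (m - lo) + (hi - m) by lia.
by rewrite iotaD subnKC // count_cat.
Qed.

Lemma row_count1 a s e : row_count a s e e.+1 = (T s e == a).
Proof. by rewrite /row_count subSnn /= addn0. Qed.

Lemma row_count0 a s lo hi :
  (forall e, lo <= e < hi -> T s e != a) -> row_count a s lo hi = 0.
Proof.
move=> neq_a; apply/eqP; rewrite eqn0Ngt -has_count; apply/hasPn => e.
by rewrite mem_iota => lo_e; apply: neq_a; lia.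
Qed.

Lemma row_count_leS a s lo hi : row_count a s lo hi <= 1 + row_count a s lo.+1 hi.
Proof.
have [lo_hi|hi_lo] := ltnP lo hi; last first.
  by have -> : row_count a s lo hi = 0 by rewrite /row_count (_ : hi - lo = 0) //; lia.
by rewrite (@row_count_cat a s lo lo.+1 hi) ?leqnSn // row_count1; case: (_ == _).
Qed.

Lemma row_count_ge a s lo m hi : lo <= m < hi -> (T s m == a) <= row_count a s lo hi.
Proof.
move=> /andP[lo_m m_hi].
rewrite (@row_count_cat a s lo m hi) ?lo_m ?(ltnW m_hi) //.
rewrite (@row_count_cat a s m m.+1 hi) ?leqnSn // row_count1; lia.
Qed.

Lemma row_count_left0 a s d : box (s, d) -> T s d < a ->
  row_count a s (nth 0 mu s) d.+1 = 0.
Proof.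
move=> bsd Tsd_a; apply: row_count0 => e /andP[mu_e e_d]; apply/negbT/eqP => Tse.
have bse : box (s, e) by move: bsd; rewrite /in_box /=; lia.
by have := tab_row bse bsd (_ : e <= d); rewrite Tse; lia.
Qed.

Lemma ribbon_boxE i q : ribbon_box i lam mu T q =
  box q && (i.*2 <= T q.1 q.2 <= i.*2.+1).
Proof.
by rewrite /ribbon_box /unprimed /primed doubleS; congr (_ && _); apply/orP/andP; lia.
Qed.

Section Ribbon.
Variables i r c : nat.

(* The reading word strictly after (r, c), up to and including (s, d), s < r. *)
Definition upto_word s d :=
  row_word r c.+1 (nth 0 lam r) ++ rows_word s.+1 (r - s.+1) ++
  row_word s (nth 0 mu s) d.+1.
Definition count_upto a s d := count (fun x : nat * pos => x.1 == a) (upto_word s d).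

Lemma count_upto_east a s d : ~~ odd a -> box (s, d.+1) ->
  count_upto a s d.+1 = count_upto a s d + (T s d.+1 == a).
Proof.
rewrite /in_box /= => even_a /andP[mu_d d_lam].
rewrite /count_upto /upto_word (@row_word_cat s _ d.+1 d.+2) ?mu_d ?leqnSn //.
by rewrite !count_cat !count_row_word // row_count1 !addnA.
Qed.

Lemma count_upto_north a s d : ~~ odd a -> s.+1 < r -> box (s.+1, d) -> box (s, d) ->
  count_upto a s d = count_upto a s.+1 d + row_count a s.+1 d.+1 (nth 0 lam s.+1) +
                     row_count a s (nth 0 mu s) d.+1.
Proof.
move=> even_a s_r; rewrite /in_box /= => /andP[mu1_d d_lam1] /andP[mu_d d_lam].
rewrite /count_upto /upto_word (_ : r - s.+1 = (r - s.+2).+1); last lia.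
rewrite /rows_word [iota _ _.+1]/= rev_cons -cats1 map_cat flatten_cat /= cats0.
rewrite /full_row_word (@row_word_cat s.+1 _ d.+1) ?(leqW mu1_d) ?d_lam1 //.
by rewrite !count_cat !count_row_word //; lia.
Qed.

Lemma count_upto_base a s d : ~~ odd a -> s.+1 = r ->
  count_upto a s d = row_count a r c.+1 (nth 0 lam r) + row_count a s (nth 0 mu s) d.+1.
Proof.
by move=> even_a s_r; rewrite /count_upto /upto_word -s_r subnn !count_cat !count_row_word.
Qed.

Definition js_right_below s d := row_count i.*2.+2 s.+1 d.+1 (nth 0 lam s.+1).

Lemma js_right_below0 s d : box (s, d) ->
  (forall e, d < e -> box (s, e) -> T s e <= i.*2.+1 -> False) ->
  js_right_below s d = 0.
Proof.
move=> bsd no_small; apply: row_count0 => e /andP[d_e e_lam]; apply/eqP => Te.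
have b1e : box (s.+1, e) by rewrite /in_box /= e_lam andbT; have := box_mu_succ bsd; lia.
have bse : box (s, e) by apply: box_up b1e bsd _ _; lia.
apply: (no_small e) => //; have := col_lt_unprimedd bse b1e (ltnSn s).
by rewrite Te /= odd_double; lia.
Qed.

Lemma js_right_below_primed s d : box (s, d) -> T s d = i.*2.+1 -> js_right_below s d = 0.
Proof.
move=> bsd Tsd; apply: js_right_below0 => // e d_e bse.
by have := row_lt_primedl bsd bse d_e; rewrite Tsd /= odd_double; lia.
Qed.

Lemma js_right_below_unprimed s d : box (s, d) -> T s d = i.*2 ->
  ~~ ribbon_box i lam mu T (s, d.+1) -> js_right_below s d = 0.
Proof.
move=> bsd Tsd; rewrite ribbon_boxE /= => not_ribbon.
apply: js_right_below0 => // e d_e bse Tse.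
have bs1 : box (s, d.+1) by apply: box_row bsd bse _; lia.
have := tab_row bsd bs1 (leqnSn d); have := tab_row bs1 bse d_e.
by move: not_ribbon; rewrite bs1 Tsd; lia.
Qed.

(* Along the ribbon the i's read since y outnumber the j's, up to the slack
   [js_right_below q] of j's already read in the next row; at an end of the
   ribbon this slack vanishes. *)
Definition ribbon_inv kk (q : pos) :=
  count_upto i.*2.+2 q.1 q.2 + (T q.1 q.2 == i.*2) + kk <=
  count_upto i.*2 q.1 q.2 + js_right_below q.1 q.2.

Lemma ribbon_inv_north kk s d : s.+1 < r ->
  ribbon_box i lam mu T (s.+1, d) -> ribbon_box i lam mu T (s, d) ->
  ribbon_inv kk (s.+1, d) -> ribbon_inv kk (s, d).
Proof.
rewrite !ribbon_boxE /= => s_r /andP[b1d T1d] /andP[bsd Tsd].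
have T1d_primed : T s.+1 d = i.*2.+1.
  have [T1d_i|] := eqVneq (T s.+1 d) i.*2; last lia.
  by have := col_lt_unprimedd bsd b1d (ltnSn s); rewrite T1d_i odd_double => /(_ isT); lia.
have no_j : row_count i.*2.+2 s (nth 0 mu s) d.+1 = 0.
  by apply: row_count_left0 bsd _; lia.
have is_i : (T s d == i.*2) <= row_count i.*2 s (nth 0 mu s) d.+1.
  by apply: row_count_ge; move: bsd; rewrite /in_box /=; lia.
have even_j : ~~ odd i.*2.+2 by rewrite /= odd_double.
rewrite /ribbon_inv /= !(count_upto_north _ s_r b1d bsd) ?odd_double //.
rewrite (js_right_below_primed b1d T1d_primed) T1d_primed no_j /js_right_below; lia.
Qed.

Lemma ribbon_inv_east kk s d :
  ribbon_box i lam mu T (s, d) -> ribbon_box i lam mu T (s, d.+1) ->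
  ribbon_inv kk (s, d) -> ribbon_inv kk (s, d.+1).
Proof.
rewrite !ribbon_boxE /= => /andP[bsd Tsd] /andP[bs1 Ts1].
have Tsd_i : T s d = i.*2.
  have [Tsd_j'|] := eqVneq (T s d) i.*2.+1; last lia.
  by have := row_lt_primedl bsd bs1 (ltnSn d); rewrite Tsd_j' /= odd_double => /(_ isT); lia.
have even_j : ~~ odd i.*2.+2 by rewrite /= odd_double.
have := @row_count_leS i.*2.+2 s.+1 d.+1 (nth 0 lam s.+1).
rewrite /ribbon_inv /js_right_below /= !count_upto_east ?odd_double // Tsd_i eqxx.
by rewrite (_ : (T s d.+1 == i.*2.+2) = false); case: (T s d.+1 == i.*2); lia.
Qed.

Lemma ribbon_end_spec kk fuel q :
  ribbon_box i lam mu T q -> q.1 < r -> ribbon_inv kk q ->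
  q.1 + (sumn lam - q.2) <= fuel ->
  let p := ribbon_end fuel i lam mu T q in
  [/\ ribbon_box i lam mu T p, p.1 < r, ribbon_inv kk p,
      ~~ ((0 < p.1) && ribbon_box i lam mu T (p.1.-1, p.2)) &
      ~~ ribbon_box i lam mu T (p.1, p.2.+1)].
Proof.
elim: fuel q => [|n IHn] [s d] rq /= s_r inv_q fuel_q.
  by have := box_lt_sumn (andP rq).1; lia.
case: ifP => [/andP[+ north]|not_north].
  case: s rq s_r inv_q fuel_q north => [//|s] rq s_r inv_q fuel_q north _.
  by apply: IHn => //=; [lia | exact: ribbon_inv_north s_r rq north inv_q].
case: ifP => [east|not_east]; last by rewrite not_north not_east.
have := box_lt_sumn (andP east).1.
by move=> ?; apply: IHn => //=; [exact: ribbon_inv_east rq east inv_q | lia].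
Qed.

Lemma ribbon_inv_start kk s : s.+1 = r -> ribbon_box i lam mu T (s, c) ->
  kk <= row_count i.*2 s (nth 0 mu s) c -> ribbon_inv kk (s, c).
Proof.
rewrite ribbon_boxE /= => s_r /andP[bsc Tsc] kk_le.
have even_j : ~~ odd i.*2.+2 by rewrite /= odd_double.
have no_j : row_count i.*2.+2 s (nth 0 mu s) c.+1 = 0.
  by apply: row_count_left0 bsc _; lia.
rewrite /ribbon_inv /js_right_below /= !count_upto_base ?odd_double // s_r no_j.
move: bsc; rewrite /in_box /= => /andP[mu_c _].
by rewrite (@row_count_cat _ s _ c) ?mu_c ?leqnSn // row_count1; lia.
Qed.

Hypothesis popped_after : popped i (word_after r c) = 0.

Lemma count_upto_bracketed s d : s < r -> box (s, d) ->
  count_upto i.*2 s d <= count_upto i.*2.+2 s d.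
Proof.
move=> s_r; rewrite /in_box /= => /andP[mu_d d_lam].
suff [w after_eq] : exists w, word_after r c = upto_word s d ++ w.
  have := count_i_prefix i (upto_word s d) w.
  by rewrite -after_eq popped_after addn0 /unprimed doubleS.
rewrite /word_after /upto_word /rows_word.
have -> : r = s + (r - s.+1).+1 by lia.
rewrite iotaD add0n rev_cat [iota s _]/= rev_cons -cats1 !map_cat !flatten_cat /=.
rewrite /full_row_word (@row_word_cat s _ d.+1) ?mu_d ?d_lam; last lia.
by rewrite (_ : s + _ - s.+1 = r - s.+1); [eexists; rewrite -!catA | lia].
Qed.

Lemma ribbon_end_primed kk p :
  ribbon_box i lam mu T p -> p.1 < r -> ribbon_inv kk p ->
  ~~ ribbon_box i lam mu T (p.1, p.2.+1) -> kk = 0 /\ T p.1 p.2 = i.*2.+1.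
Proof.
case: p => s d; rewrite ribbon_boxE /= => /andP[bsd Tsd] s_r inv_p not_east.
have := count_upto_bracketed s_r bsd; move: inv_p; rewrite /ribbon_inv /=.
have [Tsd_i|Tsd_ne] := eqVneq (T s d) i.*2.
  by rewrite (js_right_below_unprimed bsd Tsd_i not_east) Tsd_i; lia.
have Tsd_j' : T s d = i.*2.+1 by lia.
by rewrite (js_right_below_primed bsd Tsd_j'); lia.
Qed.

End Ribbon.

Section Lowering.
Variable i : nat.

Definition lowerable (y p : pos) : Prop :=
  [/\ forall c', c' < y.2 -> box (y.1, c') -> (y.1, c') <> p -> T y.1 c' <= i.*2,
      forall r', r' < p.1 -> box (r', p.2) -> T r' p.2 < i.*2,
      p.1 = y.1 -> p.2 <= y.2 & p.2 = y.2 -> p.1 <= y.1].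

Hypothesis i_gt0 : 0 < i.

Lemma lower_y_tableau y F : box y -> T y.1 y.2 = i.*2.+2 -> lowerable y y ->
  (forall a b, F a b = if (a, b) == y then i.*2 else T a b) ->
  primed_tableau k lam mu F.
Proof.
case: y => r c; rewrite /lowerable /= => b_y Ty [left_y above_y _ _] F_eq.
apply: primed_tableau_of_pairs tab_shape _ _ _ => [a b bab|a c1 c2 b1 b2 c12|a1 a2 b b1 b2 a12].
- by rewrite F_eq; case: eqP => _; [have := tab_range b_y; lia | apply: tab_range].
- rewrite !F_eq; case: eqP => [[? ?]|_]; case: eqP => [[? ?]|_]; subst; first lia.
  + by have := tab_row b_y b2 (ltnW c12); rewrite odd_double; lia.
  + split=> [|odd1 eq1]; first by apply: left_y => // -[?]; lia.
    by rewrite eq1 odd_double in odd1.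
  + by split; [apply: tab_row b1 b2 (ltnW c12) | apply: tab_row_primed].
- rewrite !F_eq; case: eqP => [[? ?]|_]; case: eqP => [[? ?]|_]; subst; first lia.
  + by have := tab_col b_y b2 (ltnW a12); lia.
  + by have := above_y _ a12 b1; lia.
  + by split; [apply: tab_col b1 b2 (ltnW a12) | apply: tab_col_unprimed].
Qed.

Lemma lower_y_p_tableau y p F : box y -> T y.1 y.2 = i.*2.+2 ->
  box p -> T p.1 p.2 = i.*2.+1 -> lowerable y p ->
  (forall a b, F a b = if (a, b) == y then i.*2.+1
                       else if (a, b) == p then i.*2 else T a b) ->
  primed_tableau k lam mu F.
Proof.
case: y p => r c [pr pc]; rewrite /lowerable /=.
move=> b_y Ty bp Tp [left_y above_p p_left p_above] F_eq.
have even_y : ~~ odd (T r c) by rewrite Ty /= odd_double.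
have odd_p : odd (T pr pc) by rewrite Tp /= odd_double.
apply: primed_tableau_of_pairs tab_shape _ _ _ => [a b bab|a c1 c2 b1 b2 c12|a1 a2 b b1 b2 a12].
- rewrite F_eq; have := tab_range b_y; case: eqP => _; first lia.
  by case: eqP => _; [lia | move=> _; apply: tab_range].
- rewrite !F_eq.
  case: eqP => [[? ?]|_]; [|case: eqP => [[? ?]|ne1p]];
  case: eqP => [[? ?]|_]; try case: eqP => [[? ?]|_]; subst; try lia.
  + by have := tab_row b_y b2 (ltnW c12); lia.
  + by have := row_lt_primedl bp b2 c12 odd_p; lia.
  + by have := left_y _ c12 b1 ne1p; lia.
  + split=> [|odd1 eq1]; first by have := row_lt_primedr b1 bp c12 odd_p; lia.
    by rewrite eq1 odd_double in odd1.
  + by split; [apply: tab_row b1 b2 (ltnW c12) | apply: tab_row_primed].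
- rewrite !F_eq.
  case: eqP => [[? ?]|_]; [|case: eqP => [[? ?]|_]];
  case: eqP => [[? ?]|_]; try case: eqP => [[? ?]|_]; subst; try lia.
  + by have := tab_col b_y b2 (ltnW a12); lia.
  + by have := tab_col bp b2 (ltnW a12); lia.
  + split=> [|even1 eq1]; first by have := col_lt_unprimedd b1 b_y a12 even_y; lia.
    by rewrite eq1 /= odd_double in even1.
  + by have := above_p _ a12 b1; lia.
  + by split; [apply: tab_col b1 b2 (ltnW a12) | apply: tab_col_unprimed].
Qed.

Lemma lower_tableau y p : box y -> T y.1 y.2 = i.*2.+2 ->
  box p -> p = y \/ T p.1 p.2 = i.*2.+1 -> lowerable y p ->
  primed_tableau k lam mu (lower (lower T y) p).
Proof.
move=> b_y Ty b_p [->|Tp] cond.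
  exact: lower_y_tableau b_y Ty cond (fun a b => lower_lower_same a b Ty).
have p_ne_y : p <> y by move=> p_y; rewrite p_y Ty in Tp; lia.
exact: lower_y_p_tableau b_y Ty b_p Tp cond (fun a b => lower_lower_pair a b p_ne_y Ty Tp).
Qed.

End Lowering.

Lemma col_above_lt s c v : box (s.+1, c) -> (box (s, c) -> T s c < v) ->
  forall r', r' < s.+1 -> box (r', c) -> T r' c < v.
Proof.
move=> b1 above_v r' r'_s b'; have bs : box (s, c) by apply: box_col b' b1 _; lia.
by have := tab_col b' bs (_ : r' <= s); have := above_v bs; lia.
Qed.

Section Choice.
Variables i r c : nat.
Hypotheses (b_y : box (r, c)) (Ty : T r c = i.*2.+2).
Local Notation cW := (content_W lam mu T (r, c)).
Local Notation cN := (content_N lam mu T (r, c)).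

Lemma content_W_ge c' : c' < c -> box (r, c') -> T r c' <= cW.
Proof.
case: c b_y => [//|c0] b_y' c'_c b'.
have b0 : box (r, c0) by apply: box_row b' b_y' _; lia.
by rewrite /content_W /content /= b0; apply: tab_row => //; lia.
Qed.

Lemma content_N_ge r' : r' < r -> box (r', c) -> T r' c <= cN.
Proof.
case: r b_y => [//|r0] b_y' r'_r b'.
have b0 : box (r0, c) by apply: box_col b' b_y' _; lia.
by rewrite /content_N /content /= b0; apply: tab_col => //; lia.
Qed.

Lemma content_W_le : cW <= i.*2.+2.
Proof.
case: c b_y Ty => [//|c0] b_y' Ty'; rewrite /content_W /content /=.
by case: ifP => // b0; rewrite -Ty'; apply: tab_row.
Qed.

Lemma content_N_le : cN <= i.*2.+1.
Proof.
case: r b_y Ty => [//|r0] b_y' Ty'; rewrite /content_N /content /=.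
case: ifP => // b0; have := col_lt_unprimedd b0 b_y' (ltnSn r0).
by rewrite Ty' /= odd_double => /(_ isT); lia.
Qed.

Lemma lowerable_y : cW <= i.*2 -> cN < i.*2 -> lowerable i (r, c) (r, c).
Proof.
move=> cW_i cN_i; split=> //= [c' c'_c b' _|r' r'_r b'].
- by have := content_W_ge c'_c b'; lia.
- by have := content_N_ge r'_r b'; lia.
Qed.

Hypothesis before_empty : unbracketed_j i (word_before r c) [::] = [::].

Lemma content_W_neq : cW != i.*2.+2.
Proof.
case: c b_y before_empty => [//|c0] b_y'; rewrite /content_W /content /=.
case: ifP => // b0 empty; apply/eqP => Tj; move: empty.
move: b0; rewrite /in_box /= => /andP[mu_c0 _].
rewrite /word_before (@row_word_cat r _ c0 c0.+1) ?mu_c0 ?leqnSn // row_word1 Tj.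
by rewrite /= odd_double catA unbracketed_j_cat /= /unprimed eqxx.
Qed.

Hypothesis popped_after : popped i (word_after r c) = 0.

Lemma above_west_primed : 0 < c -> box (r, c.-1) -> T r c.-1 = i.*2.+1 ->
  forall r', r' < r -> box (r', c.-1) -> T r' c.-1 < i.*2.
Proof.
case: c b_y Ty popped_after => [//|c0] b_y' Ty' popped' _ /= b_p Tp.
case: r b_y' Ty' popped' b_p Tp => [//|r0] b_y' Ty' popped' b_p Tp.
apply: col_above_lt b_p _ => b00.
have bN : box (r0, c0.+1) by apply: box_up b_y' b00 _ _.
have TN := col_lt_unprimedd bN b_y' (ltnSn r0).
rewrite Ty' /= odd_double in TN; have {}TN := TN isT.
have T0N := tab_row b00 bN (leqnSn c0).
have [T00_lt|] := ltnP (T r0 c0) i.*2 => // T00_ge.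
have [T00_i|T00_ne] := eqVneq (T r0 c0) i.*2; last first.
  have T00_j' : T r0 c0 = i.*2.+1 by lia.
  by have := row_lt_primedl b00 bN (ltnSn c0); rewrite T00_j' /= odd_double => /(_ isT); lia.
(* An i above W_y would be an extra i before the ribbon starting at N_y. *)
have rN : ribbon_box i lam mu T (r0, c0.+1) by rewrite ribbon_boxE bN /=; lia.
have one_i : 1 <= row_count i.*2 r0 (nth 0 mu r0) c0.+1.
  have := @row_count_ge i.*2 r0 (nth 0 mu r0) c0 c0.+1; rewrite T00_i eqxx; apply.
  by move: b00; rewrite /in_box /=; lia.
have inv := ribbon_inv_start erefl rN one_i.
have [rp p_r invp _ not_east] := ribbon_end_spec rN (ltnSn r0) inv (leqnn _).
by have [] := ribbon_end_primed popped' rp p_r invp not_east.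
Qed.

Lemma lowerable_west : cW = i.*2.+1 ->
  [/\ box (r, c.-1), T r c.-1 = i.*2.+1 & lowerable i (r, c) (r, c.-1)].
Proof.
move=> cW_j'; have [c_pos b_p Tp] : [/\ 0 < c, box (r, c.-1) & T r c.-1 = i.*2.+1].
  by move: cW_j'; case: c b_y => [//|c0] _; rewrite /content_W /content /=; case: ifP.
split=> //; split=> /= [c' c'_c b' c'_p|||]; last by lia.
- have c'_ne : c' != c.-1 by apply: contra_not_neq c'_p => ->.
  have c'_lt : c' < c.-1 by lia.
  by have := row_lt_primedr b' b_p c'_lt; rewrite Tp /= odd_double => /(_ isT); lia.
- exact: above_west_primed.
- by lia.
Qed.

(* For i = 0 the test c(N_y) = i would also accept a missing N_y (content 0). *)
Lemma lowerable_north : 0 < i -> cW <= i.*2 -> (cN == i.*2) || (cN == i.*2.+1) ->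
  let p := ribbon_end (r.-1 + sumn lam) i lam mu T (r.-1, c) in
  [/\ box p, T p.1 p.2 = i.*2.+1 & lowerable i (r, c) p].
Proof.
move=> i_gt0 cW_i cN_ij' p.
have [r_pos bN TN] : [/\ 0 < r, box (r.-1, c) & i.*2 <= T r.-1 c <= i.*2.+1].
  move: cN_ij'; case: r b_y => [|r0] _; rewrite /content_N /content /=; first lia.
  by case: ifP => _ ? //; split; lia.
have rN : ribbon_box i lam mu T (r.-1, c) by rewrite ribbon_boxE bN.
have r_eq : r.-1.+1 = r by lia.
have r1_lt : r.-1 < r by lia.
have inv0 : ribbon_inv i r c 0 (r.-1, c) by apply: ribbon_inv_start.
have fuel : r.-1 + (sumn lam - c) <= r.-1 + sumn lam by lia.
have [rp p_r invp not_north not_east] := ribbon_end_spec rN r1_lt inv0 fuel.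
have [_ Tp] := ribbon_end_primed popped_after rp p_r invp not_east.
rewrite {}/p; clear invp not_east.
move: (ribbon_end _ _ _ _ _ _) rp p_r not_north Tp => [s d] /= rp p_r not_north Tp.
have b_p : box (s, d) := (andP rp).1.
split=> //; split=> /= [c' c'_c b' _|r' r'_s b'||]; try lia.
- by have := content_W_ge c'_c b'; lia.
- case: s r'_s rp p_r b_p not_north Tp => [//|s] r'_s rp p_r b_p not_north Tp.
  apply: (col_above_lt b_p) r'_s b' => bs.
  move: not_north; rewrite /= ribbon_boxE bs /=.
  by have := tab_col bs b_p (leqnSn s); lia.
Qed.

End Choice.

Lemma ei_choice_spec i y p : 0 < i -> ei_choice i lam mu T = Some (y, p) ->
  [/\ box y, T y.1 y.2 = i.*2.+2, box p, p = y \/ T p.1 p.2 = i.*2.+1 &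
      lowerable i y p].
Proof.
move=> i_gt0; rewrite /ei_choice; case E: (rev _) => [//|[r c] l].
have [/= b_y + popped_after before_empty] := leftmost_unbracketed E.
rewrite /unprimed doubleS => Ty; rewrite /primed /unprimed doubleS /=.
case: ifP => [/andP[cW_i cN_i] [<- <-]|not_y].
  by split=> //; [left | apply: lowerable_y].
case: ifP => [/eqP cW_j' [<- <-]|not_west].
  by have [] := lowerable_west b_y Ty popped_after cW_j'; split=> //; right.
case: ifP => [/andP[cW_i cN_ij'] [<- <-]|not_north].
  by have [] := lowerable_north b_y Ty popped_after i_gt0 cW_i cN_ij'; split=> //; right.
have := content_W_le b_y Ty; have := content_W_neq b_y before_empty.
by have := content_N_le b_y Ty; lia.
Qed.

End Tableau.

Theorem lemma3p3 (k : nat) (lam mu : seq nat) (T : filling) (i : nat)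
  (hT : primed_tableau k lam mu T) (hi1 : 1 <= i) (hik : i <= k - 1)
  (hne : ei i lam mu T <> None) (y p : pos)
  (hyp : ei_choice i lam mu T = Some (y, p)) :
  exists T' : filling,
    ei i lam mu T = Some T' /\
    ((p = y /\ T y.1 y.2 = unprimed i.+1 /\
      (forall r c, T' r c = if (r, c) == y then unprimed i else T r c))
     \/
     (p <> y /\ in_box lam mu p /\ T y.1 y.2 = unprimed i.+1 /\ T p.1 p.2 = primed i.+1 /\
      (forall r c, T' r c = if (r, c) == y then primed i.+1
                            else if (r, c) == p then unprimed i
                            else T r c))) /\
    primed_tableau k lam mu T'.
Proof.
have [b_y Ty b_p p_cases cond] := ei_choice_spec hT hi1 hyp.
exists (lower (lower T y) p); split; first by rewrite /ei hyp.
split; last exact: (lower_tableau hT hi1 b_y Ty b_p p_cases cond).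
rewrite /primed /unprimed doubleS /=.
have [p_y|p_ne_y] := eqVneq p y.
  by left; rewrite p_y; split=> //; split=> // r c; apply: lower_lower_same.
have {p_cases} Tp : T p.1 p.2 = i.*2.+1 by case: p_cases => // /eqP; rewrite (negbTE p_ne_y).
right; split; first exact/eqP.
by do 3 split=> //; move=> r c; apply: lower_lower_pair => //; exact/eqP.
Qed.
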